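(* Let $\gamma$ be an admissible path of length $|\gamma|$, let $n\in\mathbb N$ be such that $\theta_n=2\pi/n<|\gamma|$, let $l_n=2\sin\frac{\pi}{n}$, and let $P_n$ be the $\theta_n$-discretization of $\gamma$. Let $\mathcal U$ be the configuration at $\gamma(0)$ with direction $\gamma'(0)$ and $\mathcal V$ the configuration at $\gamma(|\gamma|)$ with direction $\gamma'(|\gamma|)$ (i.e. with vectors $l_n\gamma'(0)$ and $l_n\gamma'(|\gamma|)$). Then $P_n$ is a discrete curvature-constrained path with parameters $\theta_n$ and $l_n$ that starts at $\mathcal U$ and ends at $\mathcal V$.
   Context: An admissible path is a continuously differentiable planar curve $\gamma:[0,|\gamma|]\to\mathbb R^2$ parameterized by arclength such that for all $t<s<t+\pi$ in its domain the angle between $\gamma'(s)$ and $\gamma'(t)$ is at most $s-t$. For $0<\theta<|\gamma|$ write $|\gamma|=m\theta+\delta$ with $m=\lfloor|\gamma|/\theta\rfloor$, $0\le\delta<\theta$. The $\theta$-discretization of $\gamma$ is the polygonal path with vertices $P_i=\gamma(t_i)$, $i=0,\dots,k$, where: if $\delta=0$, then $k=m$ and $t_i=i\theta$; if $\delta>0$, then $k=m+2$, $t_0=0$, $t_1=\delta/2$, $t_i-t_{i-1}=\theta$ for $i=2,\dots,m+1$, and $t_{m+2}=|\gamma|$ (so $t_{m+2}-t_{m+1}=\delta/2$). Discrete curvature-constrained paths with parameters $\theta$ (an angle) and $\ell>0$ (a length): for a polygonal path, the turn at an internal vertex is the angle in $[0,\pi]$ between the directions of the incoming and outgoing edges; an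 edge is short if its length is $<\ell$; an edge with an adjacent edge at each end is an inflection edge if the two adjacent edges lie on opposite sides of its supporting line. The path is a discrete curvature-constrained path with parameters $\theta,\ell$ if (i) every turn is at most $\theta$; (ii) no two adjacent edges are both short; (iii) for every short non-inflection edge $ab$ with adjacent edges $a^-a$, $bb^+$, the angle between the directions of $\overrightarrow{a^-a}$ and $\overrightarrow{bb^+}$ is at most $\theta$. A configuration is a pair $(u,U)$ of a point and a vector of length $\ell$; a path with first vertex $u$ starts at $(u,U)$ if prepending the segment from $u-U$ to $u$ gives a discrete curvature-constrained path, and a path with last vertex $v$ ends at $(v,V)$ if appending the segment from $v$ to $v+V$ gives a discrete curvature-constrained path. *)

From Stdlib Require Import Reals Lra Lia List.
From Coquelicot Require Import Coquelicot.
Import ListNotations.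
Open Scope R_scope.

Definition pt2 := (R * R)%type.
Definition vadd (u v : pt2) : pt2 := (fst u + fst v, snd u + snd v).
Definition vsub (u v : pt2) : pt2 := (fst u - fst v, snd u - snd v).
Definition vscale (c : R) (u : pt2) : pt2 := (c * fst u, c * snd u).
Definition vdot (u v : pt2) : R := fst u * fst v + snd u * snd v.
Definition vcross (u v : pt2) : R := fst u * snd v - snd u * fst v.
Definition vnorm (u : pt2) : R := sqrt (vdot u u).

Definition vangle (u v : pt2) : R := acos (vdot u v / (vnorm u * vnorm v)).

Definition deriv_on (a b : R) (f f' : R -> R) : Prop :=
  forall t, a <= t <= b ->
    filterlim (fun s => (f s - f t) / (s - t))
      (within (fun s => a <= s <= b /\ s <> t) (locally t)) (locally (f' t)).

Definition cont_on (a b : R) (f : R -> R) : Prop :=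
  forall t, a <= t <= b ->
    filterlim f (within (fun s => a <= s <= b) (locally t)) (locally (f t)).

Definition admissible (gamma dgamma : R -> pt2) (L : R) : Prop :=
  0 < L /\
  deriv_on 0 L (fun t => fst (gamma t)) (fun t => fst (dgamma t)) /\
  deriv_on 0 L (fun t => snd (gamma t)) (fun t => snd (dgamma t)) /\
  cont_on 0 L (fun t => fst (dgamma t)) /\
  cont_on 0 L (fun t => snd (dgamma t)) /\
  (forall t, 0 <= t <= L -> vnorm (dgamma t) = 1) /\
  (* curvature constraint *)
  (forall t s, 0 <= t -> s <= L -> t < s -> s < t + PI ->
     vangle (dgamma s) (dgamma t) <= s - t).

Definition disc_times (L theta : R) : list R :=
  let m := Z.to_nat (Int_part (L / theta)) in
  let delta := L - INR m * theta in
  if Req_dec_T delta 0 then map (fun i => INR i * theta) (seq 0 (m + 1))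
  else 0 :: map (fun i => delta / 2 + INR i * theta) (seq 0 (m + 1)) ++ [L].

Definition discretization (gamma : R -> pt2) (L theta : R) : list pt2 :=
  map gamma (disc_times L theta).

(** Polygonal paths as lists of vertices p_0, ..., p_k. *)
Definition vtx (p : list pt2) (i : nat) : pt2 := nth i p (0, 0).
Definition edge (p : list pt2) (i : nat) : pt2 := vsub (vtx p (S i)) (vtx p i).
Definition short (l : R) (e : pt2) : Prop := vnorm e < l.

(** edge (S i) = p_(i+1) p_(i+2) is an inflection edge: its neighbours
    p_i and p_(i+3) lie (strictly) on opposite sides of its supporting line. *)
Definition inflection (p : list pt2) (i : nat) : Prop :=
  let a := vtx p (S i) in let b := vtx p (S (S i)) in
  vcross (vsub b a) (vsub (vtx p i) a) * vcross (vsub b a) (vsub (vtx p (3 + i)) a) < 0.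

Definition dccp (theta l : R) (p : list pt2) : Prop :=
  (* (i) turn at every internal vertex p_(i+1) is at most theta *)
  (forall i, (i + 3 <= length p)%nat -> vangle (edge p i) (edge p (S i)) <= theta) /\
  (forall i, (i + 3 <= length p)%nat -> ~ (short l (edge p i) /\ short l (edge p (S i)))) /\
  (forall i, (i + 4 <= length p)%nat -> short l (edge p (S i)) -> ~ inflection p i ->
     vangle (edge p i) (edge p (S (S i))) <= theta).

Definition starts_at (theta l : R) (p : list pt2) (u U : pt2) : Prop :=
  head p = Some u /\ dccp theta l (vsub u U :: p).

Definition ends_at (theta l : R) (p : list pt2) (v V : pt2) : Prop :=
  last p (0, 0) = v /\ p <> [] /\ dccp theta l (p ++ [vadd v V]).

(* Along an admissible path the tangent turns by at most [s - t] between the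
   parameters [t < s].  Integrating this against suitable trigonometric primitives
   shows that for [b - a <= PI] the chord from [gamma a] to [gamma b] has length at
   least [2 sin ((b - a) / 2)] and makes an angle at most [(b - a) / 2] with the
   tangents at both of its ends.  Two consecutive edges of the discretization are
   then compared through the tangent at their common vertex, so they turn by at
   most [theta].  Edges of parameter length [theta] have length at least
   [l = 2 sin (theta / 2)], so only the first and the last edge can be short; their
   parameter length is then [delta / 2 <= theta / 2], which yields the remaining
   constraints, including those involving the end configurations. *)

From Stdlib Require Import Reals Lra Lia List ZArith.
From Coquelicot Require Import Coquelicot.
Import ListNotations.
Open Scope R_scope.

Lemma vnorm_sq u : vnorm u * vnorm u = fst u * fst u + snd u * snd u.
Proof. unfold vnorm, vdot. rewrite sqrt_sqrt; nra. Qed.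

Lemma vnorm_ge0 u : 0 <= vnorm u.
Proof. apply sqrt_pos. Qed.

Lemma vnorm_scale l u : 0 <= l -> vnorm (vscale l u) = l * vnorm u.
Proof.
  intros Hl. unfold vnorm, vdot, vscale; simpl.
  replace (l * fst u * (l * fst u) + l * snd u * (l * snd u))
    with ((l * l) * (fst u * fst u + snd u * snd u)) by ring.
  rewrite sqrt_mult by nra. now rewrite sqrt_square.
Qed.

Lemma vdot_comm u v : vdot u v = vdot v u.
Proof. unfold vdot; ring. Qed.

Lemma vdot_le_vnorm u v : vdot u v <= vnorm u * vnorm v.
Proof.
  destruct u as [a b], v as [c d]. unfold vnorm, vdot; simpl.
  rewrite <- sqrt_mult by nra.
  apply Rle_trans with (Rabs (a * c + b * d)); [apply Rle_abs|].
  rewrite <- sqrt_Rsqr_abs. apply sqrt_le_1_alt. unfold Rsqr.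
  pose proof (Rle_0_sqr (a * d - b * c)). unfold Rsqr in *. nra.
Qed.

Lemma vdot_ge_opp_vnorm u v : - (vnorm u * vnorm v) <= vdot u v.
Proof.
  pose proof (vdot_le_vnorm (vscale (-1) u) v) as H.
  replace (vnorm (vscale (-1) u)) with (vnorm u) in H
    by (unfold vnorm, vdot, vscale; simpl; f_equal; ring).
  replace (vdot (vscale (-1) u) v) with (- vdot u v) in H
    by (unfold vdot, vscale; simpl; ring).
  lra.
Qed.

(* Coordinates of [u] and [v] in the orthonormal frame [(w, w⊥)]. *)
Lemma vdot_frame w u v : vnorm w = 1 ->
  vdot u v = vdot u w * vdot v w + vcross w u * vcross w v.
Proof.
  intros Hw. pose proof (vnorm_sq w) as Ew. rewrite Hw in Ew.
  unfold vdot, vcross in *.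
  replace (fst u * fst v + snd u * snd v) with
    ((fst u * fst v + snd u * snd v) * (fst w * fst w + snd w * snd w)) by (rewrite <- Ew; ring).
  ring.
Qed.

Lemma vnorm_sq_frame w v : vnorm w = 1 ->
  vnorm v * vnorm v = vdot v w * vdot v w + vcross w v * vcross w v.
Proof. intros Hw. rewrite vnorm_sq, <- (vdot_frame w v v Hw). reflexivity. Qed.

Lemma vangle_scale_l l u v : 0 < l -> 0 < vnorm u -> 0 < vnorm v ->
  vangle (vscale l u) v = vangle u v.
Proof.
  intros. unfold vangle. rewrite vnorm_scale by lra. f_equal.
  replace (vdot (vscale l u) v) with (l * vdot u v) by (unfold vdot, vscale; simpl; ring).
  field. split; lra.
Qed.

Lemma vangle_scale_r l u v : 0 < l -> 0 < vnorm u -> 0 < vnorm v ->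
  vangle u (vscale l v) = vangle u v.
Proof.
  intros. unfold vangle. rewrite vnorm_scale by lra. f_equal.
  replace (vdot u (vscale l v)) with (l * vdot u v) by (unfold vdot, vscale; simpl; ring).
  field. split; lra.
Qed.

Lemma acos_le x b : 0 <= b <= PI -> cos b <= x -> acos x <= b.
Proof.
  intros Hb Hx. pose proof (acos_bound x).
  destruct (Rle_dec 1 x) as [H1|H1].
  { unfold acos. destruct (Rle_dec x (-1)); [lra|]. destruct (Rle_dec 1 x); lra. }
  destruct (Rle_dec x (-1)) as [H2|H2].
  - assert (cos b <= cos PI) by (rewrite cos_PI; lra).
    assert (PI <= b) by (apply cos_decr_0; lra). lra.
  - apply cos_decr_0; try lra. rewrite cos_acos; lra.
Qed.

Lemma vangle_le u v g th : 0 < vnorm u -> 0 < vnorm v -> 0 <= g <= th -> th <= PI ->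
  cos g * vnorm u * vnorm v <= vdot u v -> vangle u v <= th.
Proof.
  intros Hu Hv Hg Hth H. unfold vangle. apply acos_le; [lra|].
  assert (cos th <= cos g) by (apply cos_decr_1; lra).
  assert (Hp : 0 < vnorm u * vnorm v) by nra.
  apply Rmult_le_reg_r with (vnorm u * vnorm v); [lra|].
  unfold Rdiv. rewrite Rmult_assoc, Rinv_l by lra. nra.
Qed.

Definition cone (w : pt2) (a : R) (v : pt2) : Prop := cos a * vnorm v <= vdot v w.

Lemma cone_vcross w a v : vnorm w = 1 -> 0 <= a <= PI / 2 -> cone w a v ->
  Rabs (vcross w v) <= sin a * vnorm v.
Proof.
  intros Hw Ha Hc. unfold cone in Hc. pose proof PI_RGT_0.
  pose proof (vnorm_sq_frame w v Hw). pose proof (vnorm_ge0 v).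
  assert (0 <= cos a) by (apply cos_ge_0; lra).
  assert (0 <= sin a) by (apply sin_ge_0; lra).
  pose proof (sin2_cos2 a). unfold Rsqr in *.
  rewrite <- (Rabs_pos_eq (sin a * vnorm v)) by nra.
  apply Rsqr_le_abs_0. unfold Rsqr.
  assert (cos a * vnorm v * (cos a * vnorm v) <= vdot v w * vdot v w)
    by (apply Rmult_le_compat; nra).
  nra.
Qed.

Lemma cone_of_vcross w a v : vnorm w = 1 -> 0 < a <= PI / 2 ->
  cos a * Rabs (vcross w v) <= sin a * vdot v w -> cone w a v.
Proof.
  intros Hw Ha H. unfold cone. pose proof PI_RGT_0.
  pose proof (vnorm_sq_frame w v Hw) as N. pose proof (vnorm_ge0 v).
  set (X := vdot v w) in *. set (Y := vcross w v) in *.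
  assert (0 < sin a) by (apply sin_gt_0; lra).
  assert (0 <= cos a) by (apply cos_ge_0; lra).
  pose proof (sin2_cos2 a). unfold Rsqr in *.
  assert (0 <= X) by (pose proof (Rabs_pos Y); nra).
  assert (cos a * Y * (cos a * Y) <= sin a * X * (sin a * X)).
  { pose proof (Rsqr_abs Y) as EY. pose proof (Rabs_pos Y). unfold Rsqr in EY.
    replace (cos a * Y * (cos a * Y)) with (cos a * Rabs Y * (cos a * Rabs Y)) by nra.
    apply Rmult_le_compat; nra. }
  assert (cos a * vnorm v * (cos a * vnorm v) <= X * X) by nra.
  nra.
Qed.

Lemma cone_vdot_ge w a b v1 v2 : vnorm w = 1 -> 0 <= a <= PI / 2 -> 0 <= b <= PI / 2 ->
  cone w a v1 -> cone w b v2 -> cos (a + b) * vnorm v1 * vnorm v2 <= vdot v1 v2.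
Proof.
  intros Hw Ha Hb H1 H2.
  pose proof (cone_vcross w a v1 Hw Ha H1) as Y1.
  pose proof (cone_vcross w b v2 Hw Hb H2) as Y2.
  unfold cone in H1, H2. rewrite (vdot_frame w v1 v2 Hw), cos_plus.
  pose proof PI_RGT_0. pose proof (vnorm_ge0 v1). pose proof (vnorm_ge0 v2).
  assert (0 <= cos a) by (apply cos_ge_0; lra).
  assert (0 <= cos b) by (apply cos_ge_0; lra).
  assert (- (sin a * vnorm v1 * (sin b * vnorm v2)) <= vcross w v1 * vcross w v2).
  { pose proof (Rabs_pos (vcross w v1)). pose proof (Rabs_pos (vcross w v2)).
    assert (Rabs (vcross w v1 * vcross w v2) <= sin a * vnorm v1 * (sin b * vnorm v2))
      by (rewrite Rabs_mult; apply Rmult_le_compat; assumption).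
    pose proof (Rabs_maj2 (vcross w v1 * vcross w v2)). lra. }
  assert (cos a * vnorm v1 * (cos b * vnorm v2) <= vdot v1 w * vdot v2 w)
    by (apply Rmult_le_compat; nra).
  nra.
Qed.

Lemma vangle_le_of_cones w a b u v th : vnorm w = 1 ->
  0 <= a <= PI / 2 -> 0 <= b <= PI / 2 -> a + b <= th <= PI ->
  0 < vnorm u -> 0 < vnorm v -> cone w a u -> cone w b v -> vangle u v <= th.
Proof.
  intros Hw Ha Hb Hth Hu Hv Cu Cv. apply (vangle_le u v (a + b)); try lra.
  now apply cone_vdot_ge with w.
Qed.

Lemma sin_sub_le a s c e : 0 <= a <= PI / 2 -> 0 <= s <= 2 * a ->
  c * c + e * e = 1 -> cos s <= c -> sin (a - s) <= sin a * c - cos a * e.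
Proof.
  intros Ha Hs He Hc. pose proof PI_RGT_0.
  assert (Hc1 : -1 <= c <= 1) by nra.
  set (p := acos c).
  assert (Hp : 0 <= p <= PI) by apply acos_bound.
  assert (Sp : sin p = Rabs e).
  { unfold p. rewrite sin_acos by auto. replace (1 - c²) with (e * e) by (unfold Rsqr; lra).
    apply sqrt_Rsqr_abs. }
  assert (p <= s) by (apply cos_decr_0; try lra; unfold p; rewrite cos_acos; lra).
  assert (Hsin : sin (a - s) <= sin (a - p)) by (apply sin_incr_1; lra).
  rewrite (sin_minus a p), Sp in Hsin. unfold p in Hsin. rewrite cos_acos in Hsin by lra.
  assert (0 <= cos a) by (apply cos_ge_0; lra).
  pose proof (Rle_abs e). nra.
Qed.

Definition deriv_eps_on (a b : R) (f f' : R -> R) : Prop :=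
  forall t, a <= t <= b -> forall eps, 0 < eps ->
  exists d, 0 < d /\ forall s, a <= s <= b -> s <> t -> Rabs (s - t) < d ->
    Rabs ((f s - f t) / (s - t) - f' t) < eps.

Lemma deriv_eps_on_of_deriv_on a b f f' : deriv_on a b f f' -> deriv_eps_on a b f f'.
Proof.
  intros H t Ht eps Heps.
  destruct (proj1 (filterlim_locally _ _) (H t Ht) (mkposreal eps Heps)) as [d Hd].
  exists d. split; [apply cond_pos|]. intros s Hs Hne Hsd. now apply (Hd s).
Qed.

Lemma deriv_eps_on_sub a b a' b' f f' : a <= a' -> b' <= b ->
  deriv_eps_on a b f f' -> deriv_eps_on a' b' f f'.
Proof.
  intros Ha Hb H t Ht eps He. destruct (H t ltac:(lra) eps He) as [d [Hd Hs]].
  exists d; split; auto. intros s Hs1. apply Hs; lra.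
Qed.

Lemma deriv_eps_on_lin a b f f' g g' c1 c2 :
  deriv_eps_on a b f f' -> deriv_eps_on a b g g' ->
  deriv_eps_on a b (fun x => c1 * f x + c2 * g x) (fun x => c1 * f' x + c2 * g' x).
Proof.
  intros Hf Hg t Ht eps He.
  set (K := Rabs c1 + Rabs c2 + 1).
  assert (HK : 0 < K) by (unfold K; pose proof (Rabs_pos c1); pose proof (Rabs_pos c2); lra).
  destruct (Hf t Ht (eps / K)) as [d1 [Hd1 H1]]; [apply Rdiv_lt_0_compat; lra|].
  destruct (Hg t Ht (eps / K)) as [d2 [Hd2 H2]]; [apply Rdiv_lt_0_compat; lra|].
  exists (Rmin d1 d2). split; [now apply Rmin_pos|].
  intros s Hs Hne Hsd. pose proof (Rmin_l d1 d2). pose proof (Rmin_r d1 d2).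
  assert (Hst : s - t <> 0) by (intro; apply Hne; lra).
  specialize (H1 s Hs Hne ltac:(lra)). specialize (H2 s Hs Hne ltac:(lra)).
  replace ((c1 * f s + c2 * g s - (c1 * f t + c2 * g t)) / (s - t) - (c1 * f' t + c2 * g' t))
    with (c1 * ((f s - f t) / (s - t) - f' t) + c2 * ((g s - g t) / (s - t) - g' t))
    by (field; exact Hst).
  eapply Rle_lt_trans; [apply Rabs_triang|]. rewrite !Rabs_mult.
  assert (Rabs c1 * Rabs ((f s - f t) / (s - t) - f' t) <= Rabs c1 * (eps / K))
    by (apply Rmult_le_compat_l; [apply Rabs_pos|lra]).
  assert (Rabs c2 * Rabs ((g s - g t) / (s - t) - g' t) <= Rabs c2 * (eps / K))
    by (apply Rmult_le_compat_l; [apply Rabs_pos|lra]).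
  assert (Rabs c1 * (eps / K) + Rabs c2 * (eps / K) < eps).
  { replace (Rabs c1 * (eps / K) + Rabs c2 * (eps / K)) with (eps - eps / K)
      by (unfold K in *; field; apply Rgt_not_eq; lra).
    assert (0 < eps / K) by (apply Rdiv_lt_0_compat; lra). lra. }
  lra.
Qed.

Lemma deriv_eps_on_of_derivable a b f f' :
  (forall t, derivable_pt_lim f t (f' t)) -> deriv_eps_on a b f f'.
Proof.
  intros H t Ht eps He. destruct (H t eps He) as [d Hd]. exists d. split; [apply cond_pos|].
  intros s Hs Hne Hsd. specialize (Hd (s - t) ltac:(lra) Hsd).
  now replace (t + (s - t)) with s in Hd by ring.
Qed.

Lemma derivable_pt_lim_of_deriv_eps_on a b f f' t : deriv_eps_on a b f f' -> a < t < b ->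
  derivable_pt_lim f t (f' t).
Proof.
  intros H Ht eps He. destruct (H t ltac:(lra) eps He) as [d [Hd Hs]].
  set (r := Rmin d (Rmin (t - a) (b - t))).
  assert (Hr : 0 < r) by (apply Rmin_pos; [|apply Rmin_pos]; lra).
  exists (mkposreal r Hr). intros h Hh Hhd. simpl in Hhd.
  assert (r <= d) by apply Rmin_l.
  assert (r <= t - a) by (etransitivity; [apply Rmin_r|apply Rmin_l]).
  assert (r <= b - t) by (etransitivity; [apply Rmin_r|apply Rmin_r]).
  pose proof (Rabs_def2 _ _ Hhd).
  specialize (Hs (t + h)). replace (t + h - t) with h in Hs by ring. apply Hs; lra.
Qed.

Lemma deriv_eps_on_increment_le a b f f' t : deriv_eps_on a b f f' -> a <= t <= b ->
  exists d, 0 < d /\ forall s, a <= s <= b -> Rabs (s - t) < d ->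
    Rabs (f s - f t) <= (Rabs (f' t) + 1) * Rabs (s - t).
Proof.
  intros H Ht. destruct (H t Ht 1 Rlt_0_1) as [d [Hd Hs]]. exists d. split; auto.
  intros s Hs1 Hsd. destruct (Req_dec s t) as [->|Hne].
  { rewrite !Rminus_diag, Rabs_R0. lra. }
  specialize (Hs s Hs1 Hne Hsd).
  replace (f s - f t) with ((f s - f t) / (s - t) * (s - t))
    by (field; intro; apply Hne; lra).
  rewrite Rabs_mult. apply Rmult_le_compat_r; [apply Rabs_pos|].
  pose proof (Rabs_triang_inv ((f s - f t) / (s - t)) (f' t)). lra.
Qed.

Lemma deriv_eps_on_nonneg_le_interior a b f f' x y : deriv_eps_on a b f f' ->
  (forall t, a <= t <= b -> 0 <= f' t) -> a < x -> x <= y -> y < b -> f x <= f y.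
Proof.
  intros Hf Hpos Hx Hxy Hy.
  destruct (MVT_gen f x y f') as [c [Hc Hmvt]];
    rewrite ?Rmin_left, ?Rmax_right in * by lra.
  - intros z Hz. apply is_derive_Reals, (derivable_pt_lim_of_deriv_eps_on a b); auto; lra.
  - intros z Hz. apply derivable_continuous_pt. exists (f' z).
    apply (derivable_pt_lim_of_deriv_eps_on a b); auto; lra.
  - assert (0 <= f' c * (y - x)) by (apply Rmult_le_pos; [apply Hpos|]; lra). lra.
Qed.

Lemma deriv_eps_on_nonneg_le a b f f' : a <= b -> deriv_eps_on a b f f' ->
  (forall t, a <= t <= b -> 0 <= f' t) -> f a <= f b.
Proof.
  intros Hab Hf Hpos. destruct (Req_dec a b) as [->|Hne]; [lra|].
  destruct (deriv_eps_on_increment_le a b f f' a Hf) as [da [Hda Ha]]; [lra|].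
  destruct (deriv_eps_on_increment_le a b f f' b Hf) as [db [Hdb Hb]]; [lra|].
  set (K := Rabs (f' a) + Rabs (f' b) + 2).
  assert (HK : 0 < K) by (unfold K; pose proof (Rabs_pos (f' a)); pose proof (Rabs_pos (f' b)); lra).
  apply Rle_plus_epsilon. intros eps Heps.
  set (r := Rmin (Rmin (da / 2) (db / 2)) (Rmin ((b - a) / 2) (eps / K))).
  assert (Hr : 0 < r).
  { apply Rmin_pos; apply Rmin_pos; try lra. apply Rdiv_lt_0_compat; lra. }
  assert (r <= da / 2) by (etransitivity; [apply Rmin_l|apply Rmin_l]).
  assert (r <= db / 2) by (etransitivity; [apply Rmin_l|apply Rmin_r]).
  assert (r <= (b - a) / 2) by (etransitivity; [apply Rmin_r|apply Rmin_l]).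
  assert (r <= eps / K) by (etransitivity; [apply Rmin_r|apply Rmin_r]).
  assert (Hkr : K * r <= eps).
  { apply Rmult_le_reg_r with (/ K); [now apply Rinv_0_lt_compat|].
    replace (K * r * / K) with r by (field; apply Rgt_not_eq; lra). unfold Rdiv in *. lra. }
  specialize (Ha (a + r) ltac:(lra) ltac:(rewrite Rabs_pos_eq; lra)).
  specialize (Hb (b - r) ltac:(lra) ltac:(rewrite Rabs_left; lra)).
  replace (a + r - a) with r in Ha by ring. replace (b - r - b) with (- r) in Hb by ring.
  rewrite Rabs_Ropp, (Rabs_pos_eq r) in Hb by lra. rewrite (Rabs_pos_eq r) in Ha by lra.
  pose proof (deriv_eps_on_nonneg_le_interior a b f f' (a + r) (b - r) Hf Hpos
    ltac:(lra) ltac:(lra) ltac:(lra)).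
  pose proof (Rabs_maj2 (f (a + r) - f a)). pose proof (Rle_abs (f (b - r) - f b)).
  unfold K in Hkr. nra.
Qed.

Section AdmissiblePath.

Variables (gamma dgamma : R -> pt2) (L : R).
Hypothesis Hadm : admissible gamma dgamma L.

Definition chord (a b : R) : pt2 := vsub (gamma b) (gamma a).

Lemma vnorm_dgamma u : 0 <= u <= L -> vnorm (dgamma u) = 1.
Proof. destruct Hadm as (_&_&_&_&_&Hn&_). apply Hn. Qed.

Lemma vdot_dgamma_ge_cos u v : 0 <= u -> u <= v -> v <= L -> v - u <= PI ->
  cos (v - u) <= vdot (dgamma u) (dgamma v).
Proof.
  intros Hu Huv Hv Hpi. pose proof PI_RGT_0.
  pose proof (vdot_le_vnorm (dgamma u) (dgamma v)) as Hle.
  pose proof (vdot_ge_opp_vnorm (dgamma u) (dgamma v)) as Hge.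
  rewrite !vnorm_dgamma in Hle, Hge by lra.
  destruct (Req_dec u v) as [<-|Hne].
  { rewrite Rminus_diag, cos_0. unfold vdot. rewrite <- vnorm_sq, vnorm_dgamma; lra. }
  destruct (Req_dec (v - u) PI) as [->|Hlt].
  { rewrite cos_PI. lra. }
  destruct Hadm as (_&_&_&_&_&_&Hc).
  specialize (Hc u v Hu Hv ltac:(lra) ltac:(lra)).
  unfold vangle in Hc. rewrite !vnorm_dgamma, vdot_comm, Rmult_1_r, Rdiv_1_r in Hc by lra.
  rewrite <- (cos_acos (vdot (dgamma u) (dgamma v))) by lra.
  pose proof (acos_bound (vdot (dgamma u) (dgamma v))).
  apply cos_decr_1; lra.
Qed.

Lemma cone_dgamma_before a b : 0 <= a -> a <= b -> b <= L -> b - a <= PI ->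
  cone (dgamma b) (b - a) (dgamma a).
Proof.
  intros. unfold cone. rewrite vnorm_dgamma, Rmult_1_r by lra.
  now apply vdot_dgamma_ge_cos.
Qed.

Lemma cone_dgamma_after a b : 0 <= a -> a <= b -> b <= L -> b - a <= PI ->
  cone (dgamma a) (b - a) (dgamma b).
Proof.
  intros. unfold cone. rewrite vnorm_dgamma, Rmult_1_r, vdot_comm by lra.
  now apply vdot_dgamma_ge_cos.
Qed.

(* [u |-> vdot (gamma u) m - G u] is nondecreasing on [[a, b]]. *)
Lemma chord_vdot_ge a b m G G' : 0 <= a -> a <= b -> b <= L ->
  (forall t, derivable_pt_lim G t (G' t)) ->
  (forall u, a <= u <= b -> G' u <= vdot (dgamma u) m) ->
  G b - G a <= vdot (chord a b) m.
Proof.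
  intros Ha Hab Hb HG Hm. destruct Hadm as (_&D1&D2&_).
  apply deriv_eps_on_of_deriv_on, (deriv_eps_on_sub _ _ a b) in D1, D2; try lra.
  pose proof (deriv_eps_on_lin _ _ _ _ _ _ (fst m) (snd m) D1 D2) as Dm.
  pose proof (deriv_eps_on_lin _ _ _ _ _ _ 1 (-1) Dm (deriv_eps_on_of_derivable a b G G' HG))
    as D.
  pose proof (deriv_eps_on_nonneg_le _ _ _ _ Hab D) as M. cbv beta in M.
  assert (M' := M ltac:(intros t Ht; specialize (Hm t Ht); unfold vdot in Hm; lra)).
  unfold chord, vdot, vsub; simpl. lra.
Qed.

Lemma chord_norm_ge a b : 0 <= a -> a < b -> b <= L -> b - a <= PI ->
  2 * sin ((b - a) / 2) <= vnorm (chord a b).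
Proof.
  intros Ha Hab Hb Hpi. pose proof PI_RGT_0. set (c := (a + b) / 2).
  assert (P : sin (b - c) - sin (a - c) <= vdot (chord a b) (dgamma c)).
  { apply (chord_vdot_ge a b (dgamma c) (fun u => sin (u - c)) (fun u => cos (u - c)));
      try lra.
    - intros t. apply is_derive_Reals. auto_derive; [easy|]. unfold Rminus; ring.
    - intros u Hu. destruct (Rle_dec u c).
      + rewrite <- cos_neg. replace (- (u - c)) with (c - u) by ring.
        apply vdot_dgamma_ge_cos; unfold c in *; lra.
      + rewrite vdot_comm. apply vdot_dgamma_ge_cos; unfold c in *; lra. }
  replace (b - c) with ((b - a) / 2) in P by (unfold c; field).
  replace (a - c) with (- ((b - a) / 2)) in P by (unfold c; field).
  rewrite sin_neg in P.
  pose proof (vdot_le_vnorm (chord a b) (dgamma c)). rewrite vnorm_dgamma in * by (unfold c; lra).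
  lra.
Qed.

Lemma chord_norm_pos a b : 0 <= a -> a < b -> b <= L -> b - a <= PI ->
  0 < vnorm (chord a b).
Proof.
  intros Ha Hab Hb Hpi. pose proof (chord_norm_ge a b Ha Hab Hb Hpi). pose proof PI_RGT_0.
  assert (0 < sin ((b - a) / 2)) by (apply sin_gt_0; lra). lra.
Qed.

(* Test [chord_vdot_ge] against the two unit vectors making angle [PI / 2 - al] with [w]. *)
Lemma chord_in_cone a b w al G G' : 0 <= a -> a <= b -> b <= L ->
  vnorm w = 1 -> 0 < al <= PI / 2 ->
  (forall t, derivable_pt_lim G t (G' t)) -> G b = G a ->
  (forall u, a <= u <= b -> exists s, 0 <= s <= 2 * al /\
     cos s <= vdot (dgamma u) w /\ G' u = sin (al - s)) ->
  cone w al (chord a b).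
Proof.
  intros Ha Hab Hb Hw Hal HG HGab Hs.
  assert (K : forall sg, sg * sg = 1 ->
    sg * (cos al * vcross w (chord a b)) <= sin al * vdot (chord a b) w).
  { intros sg Hsg.
    set (m := (sin al * fst w + sg * cos al * snd w, sin al * snd w - sg * cos al * fst w)).
    assert (Em : forall v, vdot v m = sin al * vdot v w - sg * (cos al * vcross w v))
      by (intros v; unfold m, vdot, vcross; simpl; ring).
    pose proof (chord_vdot_ge a b m G G' Ha Hab Hb HG) as P.
    rewrite Em, HGab, Rminus_diag in P.
    enough (0 <= sin al * vdot (chord a b) w - sg * (cos al * vcross w (chord a b))) by lra.
    apply P. intros u Hu. destruct (Hs u Hu) as [s [Hs02 [Hc ->]]].
    rewrite Em. replace (sg * (cos al * vcross w (dgamma u)))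
      with (cos al * (sg * vcross w (dgamma u))) by ring.
    apply sin_sub_le; try lra.
    replace (sg * vcross w (dgamma u) * (sg * vcross w (dgamma u)))
      with ((sg * sg) * (vcross w (dgamma u) * vcross w (dgamma u))) by ring.
    rewrite Hsg, Rmult_1_l, <- vnorm_sq_frame, vnorm_dgamma by lra. ring. }
  apply cone_of_vcross; auto.
  assert (0 <= cos al) by (apply cos_ge_0; lra).
  unfold Rabs. destruct Rcase_abs.
  - pose proof (K (-1) ltac:(ring)). lra.
  - pose proof (K 1 ltac:(ring)). lra.
Qed.

Lemma chord_in_cone_end a b : 0 <= a -> a < b -> b <= L -> b - a <= PI ->
  cone (dgamma b) ((b - a) / 2) (chord a b).
Proof.
  intros Ha Hab Hb Hpi. pose proof PI_RGT_0. set (al := (b - a) / 2).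
  apply (chord_in_cone a b (dgamma b) al (fun u => - cos (al - b + u))
    (fun u => sin (al - b + u))); try lra.
  - apply vnorm_dgamma; lra.
  - unfold al; lra.
  - intros t. apply is_derive_Reals. auto_derive; [easy|]. unfold Rminus; ring.
  - replace (al - b + b) with al by ring. replace (al - b + a) with (- al) by (unfold al; field).
    now rewrite cos_neg.
  - intros u Hu. exists (b - u). repeat split; [unfold al; lra|unfold al; lra| |].
    + apply vdot_dgamma_ge_cos; lra.
    + f_equal; ring.
Qed.

Lemma chord_in_cone_start a b : 0 <= a -> a < b -> b <= L -> b - a <= PI ->
  cone (dgamma a) ((b - a) / 2) (chord a b).
Proof.
  intros Ha Hab Hb Hpi. pose proof PI_RGT_0. set (al := (b - a) / 2).
  apply (chord_in_cone a b (dgamma a) al (fun u => cos (al + a - u))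
    (fun u => sin (al + a - u))); try lra.
  - apply vnorm_dgamma; lra.
  - unfold al; lra.
  - intros t. apply is_derive_Reals. auto_derive; [easy|]. unfold Rminus; ring.
  - replace (al + a - a) with al by ring. replace (al + a - b) with (- al) by (unfold al; field).
    now rewrite cos_neg.
  - intros u Hu. exists (u - a). repeat split; [unfold al; lra|unfold al; lra| |].
    + rewrite vdot_comm. apply vdot_dgamma_ge_cos; lra.
    + f_equal; ring.
Qed.

Lemma vangle_chords_le th a b c : 0 <= a -> a < b -> b < c -> c <= L ->
  b - a <= th -> c - b <= th -> th <= PI -> vangle (chord a b) (chord b c) <= th.
Proof.
  intros. pose proof PI_RGT_0.
  apply (vangle_le_of_cones (dgamma b) ((b - a) / 2) ((c - b) / 2));
    try apply chord_norm_pos; try lra.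
  - apply vnorm_dgamma; lra.
  - apply chord_in_cone_end; lra.
  - apply chord_in_cone_start; lra.
Qed.

Lemma vangle_dgamma_chord_le th a b c : 0 <= a -> a <= b -> b < c -> c <= L ->
  b - a <= PI / 2 -> c - b <= PI -> b - a + (c - b) / 2 <= th -> th <= PI ->
  vangle (dgamma a) (chord b c) <= th.
Proof.
  intros. pose proof PI_RGT_0.
  apply (vangle_le_of_cones (dgamma b) (b - a) ((c - b) / 2)); try lra.
  - apply vnorm_dgamma; lra.
  - rewrite vnorm_dgamma; lra.
  - apply chord_norm_pos; lra.
  - apply cone_dgamma_before; lra.
  - apply chord_in_cone_start; lra.
Qed.

Lemma vangle_chord_dgamma_le th a b c : 0 <= a -> a < b -> b <= c -> c <= L ->
  b - a <= PI -> c - b <= PI / 2 -> (b - a) / 2 + (c - b) <= th -> th <= PI ->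
  vangle (chord a b) (dgamma c) <= th.
Proof.
  intros. pose proof PI_RGT_0.
  apply (vangle_le_of_cones (dgamma b) ((b - a) / 2) (c - b)); try lra.
  - apply vnorm_dgamma; lra.
  - apply chord_norm_pos; lra.
  - rewrite vnorm_dgamma; lra.
  - apply chord_in_cone_end; lra.
  - apply cone_dgamma_after; lra.
Qed.

End AdmissiblePath.

Definition gap (T : list R) (i : nat) : R := nth (S i) T 0 - nth i T 0.

(* What the argument uses of the parameters [t_0 < ... < t_k] of a [th]-discretization. *)
Record spaced (T : list R) (th L : R) : Prop := {
  spaced_length : (2 <= length T)%nat;
  spaced_first : nth 0 T 0 = 0;
  spaced_last : nth (pred (length T)) T 0 = L;
  spaced_gap : forall i, (S i < length T)%nat -> 0 < gap T i <= th;
  spaced_gap_inner : forall i, (0 < i)%nat -> (S (S i) < length T)%nat -> gap T i = th;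
  spaced_gap_adjacent : forall i, (S (S i) < length T)%nat -> gap T i = th \/ gap T (S i) = th;
  spaced_gap_first : gap T 0 = th \/ gap T 0 <= th / 2;
  spaced_gap_last : forall i, S (S i) = length T -> gap T i = th \/ gap T i <= th / 2 }.

Lemma nth_map_seq (f : nat -> R) n i : (i < n)%nat -> nth i (map f (seq 0 n)) 0 = f i.
Proof.
  intros H. rewrite (nth_indep _ 0 (f 0%nat)) by (rewrite length_map, length_seq; lia).
  now rewrite map_nth, seq_nth.
Qed.

Lemma spaced_uniform th m : 0 < th -> (1 <= m)%nat ->
  spaced (map (fun i => INR i * th) (seq 0 (m + 1))) th (INR m * th).
Proof.
  intros Hth Hm. set (T := map _ _).
  assert (Hlen : length T = (m + 1)%nat) by (unfold T; now rewrite length_map, length_seq).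
  assert (Hgap : forall i, (S i < length T)%nat -> gap T i = th).
  { intros i Hi. unfold gap, T. rewrite !nth_map_seq by lia. rewrite S_INR. ring. }
  split; rewrite ?Hlen.
  - lia.
  - unfold T. rewrite nth_map_seq by lia. simpl. ring.
  - unfold T. rewrite nth_map_seq by lia. f_equal. f_equal. lia.
  - intros i Hi. rewrite Hgap by lia. lra.
  - intros i _ Hi. apply Hgap. lia.
  - intros i Hi. left. apply Hgap. lia.
  - left. apply Hgap. lia.
  - intros i Hi. left. apply Hgap. lia.
Qed.

Lemma spaced_centered th m dl : 0 < dl < th -> (1 <= m)%nat ->
  spaced (0 :: map (fun i => dl / 2 + INR i * th) (seq 0 (m + 1)) ++ [INR m * th + dl])
    th (INR m * th + dl).
Proof.
  intros Hdl Hm. set (f := fun i => dl / 2 + INR i * th).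
  set (T := 0 :: map f (seq 0 (m + 1)) ++ [INR m * th + dl]).
  assert (Hlen : length T = (m + 3)%nat).
  { unfold T. simpl. rewrite length_app, length_map, length_seq. simpl. lia. }
  assert (Hmid : forall i, (i <= m)%nat -> nth (S i) T 0 = f i).
  { intros i Hi. unfold T. simpl. rewrite app_nth1 by (rewrite length_map, length_seq; lia).
    apply nth_map_seq; lia. }
  assert (Hend : nth (m + 2) T 0 = INR m * th + dl).
  { unfold T. replace (m + 2)%nat with (S (m + 1)) by lia. simpl.
    rewrite app_nth2 by (rewrite length_map, length_seq; lia).
    now rewrite length_map, length_seq, Nat.sub_diag. }
  assert (Hinner : forall i, (0 < i)%nat -> (S i <= S m)%nat -> gap T i = th).
  { intros [|i] Hi Him; [lia|]. unfold gap. rewrite !Hmid by lia.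
    unfold f; cbv beta. rewrite S_INR. ring. }
  assert (Hfirst : gap T 0 = dl / 2).
  { unfold gap. rewrite Hmid by lia. unfold f. simpl. ring. }
  assert (Hlast : gap T (S m) = dl / 2).
  { unfold gap. replace (S (S m)) with (m + 2)%nat by lia. rewrite Hend, Hmid by lia.
    unfold f; cbv beta. lra. }
  split; rewrite ?Hlen.
  - lia.
  - reflexivity.
  - now replace (pred (m + 3)) with (m + 2)%nat by lia.
  - intros i Hi. destruct i as [|i]; [rewrite Hfirst; lra|].
    destruct (Nat.eq_dec i m) as [->|Hne]; [rewrite Hlast; lra|].
    rewrite Hinner by lia. lra.
  - intros i Hi Him. apply Hinner; lia.
  - intros [|i] Hi; [right|left]; apply Hinner; lia.
  - right. rewrite Hfirst. lra.
  - intros i Hi. replace i with (S m) by lia. right. rewrite Hlast. lra.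
Qed.

Lemma disc_times_spaced L th : 0 < th < L -> spaced (disc_times L th) th L.
Proof.
  intros [Hth HL]. unfold disc_times.
  destruct (base_Int_part (L / th)) as [Z1 Z2].
  assert (EL : L = L / th * th) by (field; lra).
  assert (Hq : 1 < L / th) by nra.
  assert (Hz : (0 < Int_part (L / th))%Z) by (apply lt_IZR; lra).
  set (m := Z.to_nat (Int_part (L / th))).
  assert (Hm : INR m = IZR (Int_part (L / th)))
    by (unfold m; rewrite INR_IZR_INZ, Z2Nat.id; auto; lia).
  assert (Hm1 : (1 <= m)%nat) by (unfold m; lia).
  assert (Hlow : INR m * th <= L) by (rewrite Hm; nra).
  assert (Hup : L < INR m * th + th) by (rewrite Hm; nra).
  clearbody m.
  destruct (Req_dec_T (L - INR m * th) 0) as [E|E].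
  - assert (L = INR m * th) as -> by lra. now apply spaced_uniform.
  - pose proof (spaced_centered th m (L - INR m * th)) as H.
    replace (INR m * th + (L - INR m * th)) with L in H by ring.
    apply H; [|exact Hm1]. split; [|lra].
    destruct (Rle_lt_or_eq_dec _ _ Hlow); [lra|]. exfalso. apply E. lra.
Qed.

Lemma dccp_cons th l x p : dccp th l p ->
  vangle (vsub (vtx p 0) x) (edge p 0) <= th -> ~ short l (vsub (vtx p 0) x) ->
  ((3 <= length p)%nat -> short l (edge p 0) -> vangle (vsub (vtx p 0) x) (edge p 1) <= th) ->
  dccp th l (x :: p).
Proof.
  intros (D1&D2&D3) Hturn Hlong Hshort.
  split; [|split]; intros [|i] Hi; simpl length in Hi.
  - exact Hturn.
  - apply D1. lia.
  - intros [Hs _]. contradiction.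
  - apply D2. lia.
  - intros Hs _. apply Hshort; [lia|exact Hs].
  - apply D3. lia.
Qed.

Lemma edge_app_l p z i : (S i < length p)%nat -> edge (p ++ [z]) i = edge p i.
Proof. intros. unfold edge, vtx. rewrite !app_nth1 by lia. reflexivity. Qed.

Lemma edge_app_last p z j : length p = S j -> edge (p ++ [z]) j = vsub z (vtx p j).
Proof.
  intros Hp. unfold edge, vtx. rewrite app_nth2, app_nth1 by lia.
  now rewrite Hp, Nat.sub_diag.
Qed.

Lemma inflection_app_l p z i : (3 + i < length p)%nat -> inflection p i ->
  inflection (p ++ [z]) i.
Proof.
  intros Hi. unfold inflection, vtx. cbv zeta. rewrite !app_nth1 by lia. easy.
Qed.

Lemma dccp_snoc th l p z j : dccp th l p -> length p = S (S j) ->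
  vangle (edge p j) (vsub z (vtx p (S j))) <= th -> ~ short l (vsub z (vtx p (S j))) ->
  (forall j', j = S j' -> short l (edge p j) -> vangle (edge p j') (vsub z (vtx p (S j))) <= th) ->
  dccp th l (p ++ [z]).
Proof.
  intros (D1&D2&D3) Hp Hturn Hlong Hshort.
  split; [|split]; intros i Hi; rewrite length_app, Hp in Hi; simpl length in Hi.
  - destruct (Nat.eq_dec i j) as [->|Hne].
    + rewrite edge_app_l, edge_app_last by lia. exact Hturn.
    + rewrite !edge_app_l by lia. apply D1. lia.
  - destruct (Nat.eq_dec i j) as [->|Hne].
    + rewrite edge_app_l, edge_app_last by lia. tauto.
    + rewrite !edge_app_l by lia. apply D2. lia.
  - destruct (Nat.eq_dec (S i) j) as [<-|Hne].
    + rewrite edge_app_l, edge_app_l, edge_app_last by lia. intros Hs _. now apply Hshort.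
    + rewrite !edge_app_l by lia. intros Hs Hinf. apply D3; [lia|exact Hs|].
      contradict Hinf. apply inflection_app_l; [lia|exact Hinf].
Qed.

Lemma last_nth {A} (l : list A) d : l <> [] -> last l d = nth (pred (length l)) l d.
Proof.
  induction l as [|a [|b l] IH]; intros H; [congruence|reflexivity|].
  change (last (a :: b :: l) d) with (last (b :: l) d). now rewrite IH.
Qed.

Lemma spaced_range T th L i : spaced T th L -> (i < length T)%nat -> 0 <= nth i T 0 <= L.
Proof.
  intros HT Hi. destruct HT as [Hlen H0 HL Hgap _ _ _ _].
  assert (Hup : forall j, (j < length T)%nat -> 0 <= nth j T 0).
  { induction j as [|j IH]; intros Hj; [lra|].
    specialize (Hgap j Hj). unfold gap in Hgap. specialize (IH ltac:(lia)). lra. }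
  assert (Hdown : forall j, (j < length T)%nat -> nth (pred (length T) - j) T 0 <= L).
  { induction j as [|j IH]; intros Hj; [rewrite Nat.sub_0_r; lra|].
    specialize (Hgap (pred (length T) - S j)%nat ltac:(lia)). unfold gap in Hgap.
    replace (S (pred (length T) - S j)) with (pred (length T) - j)%nat in Hgap by lia.
    specialize (IH ltac:(lia)). lra. }
  split; [now apply Hup|].
  replace i with (pred (length T) - (pred (length T) - i))%nat by lia. apply Hdown. lia.
Qed.

Lemma edge_map (gamma : R -> pt2) T i : (S i < length T)%nat ->
  edge (map gamma T) i = chord gamma (nth i T 0) (nth (S i) T 0).
Proof.
  intros Hi. unfold edge, vtx, chord.
  rewrite !(nth_indep _ (0, 0) (gamma 0)) by (rewrite length_map; lia).
  now rewrite !map_nth.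
Qed.

Section SpacedPolygon.

Variables (gamma : R -> pt2) (L th l : R) (T : list R).
Hypothesis HT : spaced T th L.
Hypothesis Hturn : forall a b c, 0 <= a -> a < b -> b < c -> c <= L ->
  b - a <= th -> c - b <= th -> vangle (chord gamma a b) (chord gamma b c) <= th.
Hypothesis Hlong : forall a b, 0 <= a -> b <= L -> b - a = th -> ~ short l (chord gamma a b).

Lemma gap_of_short_edge i : (S i < length T)%nat -> short l (edge (map gamma T) i) ->
  gap T i <> th.
Proof.
  intros Hi Hs Hg. rewrite edge_map in Hs by lia.
  pose proof (spaced_range T th L i HT ltac:(lia)).
  pose proof (spaced_range T th L (S i) HT Hi).
  apply (Hlong (nth i T 0) (nth (S i) T 0)); [lra|lra|exact Hg|exact Hs].
Qed.

Lemma dccp_map : dccp th l (map gamma T).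
Proof.
  split; [|split]; intros i Hi; rewrite length_map in Hi.
  - rewrite !edge_map by lia.
    pose proof (spaced_range T th L i HT ltac:(lia)).
    pose proof (spaced_range T th L (S (S i)) HT ltac:(lia)).
    pose proof (spaced_gap _ _ _ HT i ltac:(lia)).
    pose proof (spaced_gap _ _ _ HT (S i) ltac:(lia)). unfold gap in *.
    apply Hturn; lra.
  - intros [Hs1 Hs2].
    destruct (spaced_gap_adjacent _ _ _ HT i ltac:(lia)) as [Hg|Hg].
    + exact (gap_of_short_edge i ltac:(lia) Hs1 Hg).
    + exact (gap_of_short_edge (S i) ltac:(lia) Hs2 Hg).
  - intros Hs _. exfalso.
    exact (gap_of_short_edge (S i) ltac:(lia) Hs
      (spaced_gap_inner _ _ _ HT (S i) ltac:(lia) ltac:(lia))).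
Qed.

Lemma starts_at_map U : ~ short l U ->
  (forall a b, 0 <= a <= th / 2 -> a < b -> b - a <= th -> b <= L ->
     vangle U (chord gamma a b) <= th) ->
  starts_at th l (map gamma T) (gamma 0) U.
Proof.
  intros HU Hstart. pose proof (spaced_length _ _ _ HT) as Hlen.
  pose proof (spaced_first _ _ _ HT) as H0.
  assert (V0 : vtx (map gamma T) 0 = gamma 0).
  { unfold vtx. rewrite (nth_indep _ (0, 0) (gamma 0)) by (rewrite length_map; lia).
    now rewrite map_nth, H0. }
  split.
  { destruct T as [|t0 T']; [simpl in Hlen; lia|]. simpl in H0 |- *. now rewrite H0. }
  assert (EU : vsub (vtx (map gamma T) 0) (vsub (gamma 0) U) = U).
  { rewrite V0. unfold vsub. destruct U; simpl. f_equal; ring. }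
  pose proof (spaced_range T th L 1 HT ltac:(lia)).
  pose proof (spaced_gap _ _ _ HT 0 ltac:(lia)). unfold gap in *.
  apply dccp_cons; rewrite ?EU, ?length_map; [apply dccp_map| |exact HU|].
  - rewrite edge_map by lia. rewrite H0 in *. apply Hstart; lra.
  - intros Hlen3 Hs. rewrite edge_map by lia.
    pose proof (spaced_range T th L 2 HT ltac:(lia)).
    pose proof (spaced_gap _ _ _ HT 1 ltac:(lia)). unfold gap in *.
    destruct (spaced_gap_first _ _ _ HT) as [Hg|Hg].
    + exfalso. exact (gap_of_short_edge 0 ltac:(lia) Hs Hg).
    + unfold gap in Hg. rewrite H0 in *. apply Hstart; lra.
Qed.

Lemma ends_at_map V : ~ short l V ->
  (forall a b, 0 <= a -> a < b -> b - a <= th -> L - th / 2 <= b <= L ->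
     vangle (chord gamma a b) V <= th) ->
  ends_at th l (map gamma T) (gamma L) V.
Proof.
  intros HV Hend. pose proof (spaced_length _ _ _ HT) as Hlen.
  pose proof (spaced_last _ _ _ HT) as HL.
  destruct (length T) as [|[|j]] eqn:EL; try lia. simpl pred in HL.
  assert (VL : vtx (map gamma T) (S j) = gamma L).
  { unfold vtx. rewrite (nth_indep _ (0, 0) (gamma 0)) by (rewrite length_map; lia).
    now rewrite map_nth, HL. }
  assert (Hne : map gamma T <> []) by (intro E; apply (f_equal (@length _)) in E;
    rewrite length_map, EL in E; discriminate).
  split; [|split; [exact Hne|]].
  { rewrite last_nth by exact Hne. now rewrite length_map, EL. }
  assert (EV : vsub (vadd (gamma L) V) (vtx (map gamma T) (S j)) = V).
  { rewrite VL. unfold vsub, vadd. destruct V; simpl. f_equal; ring. }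
  pose proof (spaced_range T th L j HT ltac:(lia)).
  pose proof (spaced_gap _ _ _ HT j ltac:(lia)). unfold gap in *.
  apply (dccp_snoc _ _ _ _ j); rewrite ?EV; [apply dccp_map|now rewrite length_map| |exact HV|].
  - rewrite edge_map by lia. rewrite HL in *. apply Hend; lra.
  - intros j' -> Hs. rewrite edge_map by lia.
    pose proof (spaced_range T th L j' HT ltac:(lia)).
    pose proof (spaced_gap _ _ _ HT j' ltac:(lia)). unfold gap in *.
    destruct (spaced_gap_last _ _ _ HT (S j') ltac:(lia)) as [Hg|Hg].
    + exfalso. exact (gap_of_short_edge (S j') ltac:(lia) Hs Hg).
    + unfold gap in Hg. rewrite HL in *. apply Hend; lra.
Qed.

End SpacedPolygon.

Lemma vangle_le_PI u v : vangle u v <= PI.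
Proof. apply acos_bound. Qed.

Lemma not_short_0 e : ~ short 0 e.
Proof. unfold short. pose proof (vnorm_ge0 e). lra. Qed.

Lemma not_short_scale_unit l u : 0 <= l -> vnorm u = 1 -> ~ short l (vscale l u).
Proof. intros Hl Hu. unfold short. rewrite vnorm_scale, Hu by exact Hl. lra. Qed.

Lemma discretization_dccp (gamma dgamma : R -> pt2) L th :
  admissible gamma dgamma L -> 0 < th <= PI -> th < L ->
  dccp th (2 * sin (th / 2)) (discretization gamma L th) /\
  starts_at th (2 * sin (th / 2)) (discretization gamma L th)
    (gamma 0) (vscale (2 * sin (th / 2)) (dgamma 0)) /\
  ends_at th (2 * sin (th / 2)) (discretization gamma L th)
    (gamma L) (vscale (2 * sin (th / 2)) (dgamma L)).
Proof.
  intros Hadm [Hth Hpi] HL. pose proof PI_RGT_0. set (l := 2 * sin (th / 2)).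
  assert (Hl : 0 < l) by (assert (0 < sin (th / 2)) by (apply sin_gt_0; lra); unfold l; lra).
  pose proof (disc_times_spaced L th (conj Hth HL)) as HT.
  pose proof (vnorm_dgamma gamma dgamma L Hadm) as Hunit.
  pose proof (chord_norm_pos gamma dgamma L Hadm) as Hpos.
  assert (Hturn : forall a b c, 0 <= a -> a < b -> b < c -> c <= L -> b - a <= th ->
    c - b <= th -> vangle (chord gamma a b) (chord gamma b c) <= th)
    by (intros; eapply vangle_chords_le; eauto).
  assert (Hlong : forall a b, 0 <= a -> b <= L -> b - a = th -> ~ short l (chord gamma a b)).
  { intros a b Ha Hb Hab. unfold short, l. rewrite <- Hab.
    pose proof (chord_norm_ge gamma dgamma L Hadm a b). lra. }
  unfold discretization. split; [|split].
  - now apply dccp_map with L.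
  - apply starts_at_map with L; auto.
    + apply not_short_scale_unit; [lra|apply Hunit; lra].
    + intros a b Ha Hab Hb HbL.
      rewrite vangle_scale_l by (try rewrite Hunit; try apply Hpos; lra).
      apply (vangle_dgamma_chord_le gamma dgamma L Hadm th 0 a b); lra.
  - apply ends_at_map; auto.
    + apply not_short_scale_unit; [lra|apply Hunit; lra].
    + intros a b Ha Hab Hba Hb.
      rewrite vangle_scale_r by (try rewrite Hunit; try apply Hpos; lra).
      apply (vangle_chord_dgamma_le gamma dgamma L Hadm th a b L); lra.
Qed.

Theorem lemma17 (gamma dgamma : R -> pt2) (L : R) (n : nat) :
  admissible gamma dgamma L ->
  (1 <= n)%nat ->
  2 * PI / INR n < L ->
  dccp (2 * PI / INR n) (2 * sin (PI / INR n))
    (discretization gamma L (2 * PI / INR n)) /\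
  starts_at (2 * PI / INR n) (2 * sin (PI / INR n))
    (discretization gamma L (2 * PI / INR n))
    (gamma 0) (vscale (2 * sin (PI / INR n)) (dgamma 0)) /\
  ends_at (2 * PI / INR n) (2 * sin (PI / INR n))
    (discretization gamma L (2 * PI / INR n))
    (gamma L) (vscale (2 * sin (PI / INR n)) (dgamma L)).
Proof.
  intros Hadm Hn HL. pose proof PI_RGT_0.
  assert (Hn1 : 1 <= INR n) by (apply (le_INR 1); lia).
  destruct (Nat.eq_dec n 1) as [->|Hn2].
  - (* [th = 2 PI] and [l = 0]: every constraint is vacuous. *)
    replace (2 * sin (PI / INR 1)) with 0 by (simpl; rewrite Rdiv_1_r, sin_PI; ring).
    set (th := 2 * PI / INR 1) in *.
    assert (Hang : forall u v, vangle u v <= th)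
      by (intros u v; pose proof (vangle_le_PI u v); unfold th; simpl; lra).
    pose proof (disc_times_spaced L th ltac:(unfold th in *; simpl in *; lra)) as HT.
    unfold discretization. split; [|split];
      [apply dccp_map with L|apply starts_at_map with L|apply ends_at_map];
      auto using not_short_0.
  - assert (Hn2' : 2 <= INR n) by (apply (le_INR 2); lia).
    replace (PI / INR n) with (2 * PI / INR n / 2) by (field; lra).
    apply discretization_dccp; [exact Hadm|split|exact HL].
    + apply Rdiv_lt_0_compat; lra.
    + apply Rle_div_l; nra.
Qed.
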